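(* Let $X$ be a convex subset of a uniformly convex normed space $(\widetilde{X},|\cdot|)$, and let $P,A\subseteq X$ be nonempty with $d(P,A)>0$. Let $\operatorname{dom}(P,A)=\{x\in X: d(x,P)\leq d(x,A)\}$. Then, with closure, interior and boundary taken relative to $X$ (with the topology induced by the norm), $$\partial(\operatorname{dom}(P,A))=\{x\in X: d(x,P)=d(x,A)\},$$ $$\operatorname{Int}(\operatorname{dom}(P,A))=\{x\in X: d(x,P)<d(x,A)\},$$ $$\operatorname{dom}(P,A)=\overline{\{x\in X: d(x,P)<d(x,A)\}}.$$
   Context: A normed space $(\widetilde{X},|\cdot|)$ is uniformly convex if for each $\epsilon\in(0,2]$ there is $\delta\in(0,1]$ such that for all $x,y\in\widetilde{X}$ with $|x|=|y|=1$ and $|x-y|\geq\epsilon$ one has $|(x+y)/2|\leq 1-\delta$. The metric is $d(x,y)=|x-y|$; for $x\in X$ and nonempty $S\subseteq X$, $d(x,S)=\inf\{d(x,s): s\in S\}$; and $d(P,A)=\inf\{d(p,a): p\in P, a\in A\}$. *)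

From mathcomp Require Import all_boot all_order all_algebra.
From mathcomp Require Import all_classical all_reals all_analysis.
Set Implicit Arguments. Unset Strict Implicit. Unset Printing Implicit Defensive.
Import Order.TTheory GRing.Theory Num.Theory.
Import numFieldNormedType.Exports.
Local Open Scope classical_set_scope.
Local Open Scope ring_scope.

Definition uniformly_convex (R : realType) (V : normedModType R) : Prop :=
  forall eps : R, 0 < eps -> eps <= 2 ->
    exists delta : R, 0 < delta /\ delta <= 1 /\
      forall x y : V, `|x| = 1 -> `|y| = 1 -> eps <= `|x - y| ->
        `|(2^-1 : R) *: (x + y)| <= 1 - delta.

Definition dist_pt (R : realType) (V : normedModType R) (x : V) (S : set V) : R :=
  inf [set `|x - s| | s in S].

Definition dist_sets (R : realType) (V : normedModType R) (P A : set V) : R :=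
  inf [set r : R | exists p, P p /\ exists a, A a /\ r = `|p - a|].

Definition rel_interior (R : realType) (V : normedModType R) (X D : set V) : set V :=
  [set x | X x /\ exists e : R, 0 < e /\
      forall y, X y -> `|x - y| < e -> D y].

Definition rel_closure (R : realType) (V : normedModType R) (X D : set V) : set V :=
  [set x | X x /\ forall e : R, 0 < e ->
      exists y, X y /\ D y /\ `|x - y| < e].

Definition rel_boundary (R : realType) (V : normedModType R) (X D : set V) : set V :=
  rel_closure X D `\` rel_interior X D.

Definition dom (R : realType) (V : normedModType R) (X P A : set V) : set V :=
  [set x | X x /\ dist_pt x P <= dist_pt x A].

(* Distance functions are 1-Lipschitz, so [d(.,P) < d(.,A)] is relatively
   open and dom(P,A) is relatively closed. The substance is that a point x with
   d(x,P) = d(x,A) is a limit of points strictly closer to A (and, by symmetry,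
   of points strictly closer to P): move from x a short way t towards an almost
   nearest point a of A, to y. For p in P, either the path x -> y -> p bends by
   a definite angle, and uniform convexity makes |y - p| exceed
   |x - p| - |x - y| by a definite multiple of t, or it is nearly straight,
   which puts p close to a, against d(P,A) > 0. *)
From mathcomp Require Import all_boot all_order all_algebra.
From mathcomp Require Import all_classical all_reals all_analysis.
From mathcomp Require Import lra.
Set Implicit Arguments. Unset Strict Implicit.
Import Order.TTheory GRing.Theory Num.Theory.
Import numFieldNormedType.Exports.
Local Open Scope classical_set_scope.
Local Open Scope ring_scope.

Section DistanceToSet.
Variables (R : realType) (V : normedModType R).
Implicit Types (x y s : V) (S T : set V).

Lemma dist_pt_lbound x S : has_lbound [set `|x - s| | s in S].
Proof. by exists 0 => _ [s _ <-]. Qed.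

Lemma dist_pt_le x S s : S s -> dist_pt x S <= `|x - s|.
Proof. by move=> Ss; apply: (ge_inf (dist_pt_lbound x S)); exists s. Qed.

Lemma dist_pt_ge x S r :
  S !=set0 -> (forall s, S s -> r <= `|x - s|) -> r <= dist_pt x S.
Proof.
move=> [s0 Ss0] H; apply: lb_le_inf; first by exists `|x - s0|, s0.
by move=> _ [s Ss <-]; apply: H.
Qed.

Lemma dist_pt_approx x S e :
  S !=set0 -> 0 < e -> exists2 s, S s & `|x - s| < dist_pt x S + e.
Proof.
move=> [s0 Ss0] e0.
have Sx0 : [set `|x - s| | s in S] !=set0 by exists `|x - s0|, s0.
by have [_ [s Ss <-] ?] := inf_adherent e0 (conj Sx0 (dist_pt_lbound x S)); exists s.
Qed.

Lemma dist_pt_lipschitz x y S :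
  S !=set0 -> dist_pt x S <= dist_pt y S + `|x - y|.
Proof.
move=> S0; rewrite -lerBlDr; apply: dist_pt_ge => // s Ss.
rewrite lerBlDr; apply: (le_trans (dist_pt_le x Ss)).
by rewrite (addrC `|y - s|); apply: ler_distD.
Qed.

Lemma dist_pt_lt_near x y S T : S !=set0 -> T !=set0 ->
  `|x - y| < (dist_pt x T - dist_pt x S) / 2 -> dist_pt y S < dist_pt y T.
Proof.
move=> S0 T0 xy.
have := dist_pt_lipschitz y x S0; have := dist_pt_lipschitz x y T0.
rewrite (distrC y x); lra.
Qed.

Lemma dist_sets_le S T s t : S s -> T t -> dist_sets S T <= `|s - t|.
Proof.
move=> Ss Tt; apply: ge_inf; last by exists s; split => //; exists t.
by exists 0 => _ [s' [_ [t' [_ ->]]]].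
Qed.

Lemma dist_setsC S T : dist_sets S T = dist_sets T S.
Proof.
congr inf; apply/seteqP; split => r [s [Ss [t [Tt ->]]]];
  by exists t; split => //; exists s; rewrite distrC.
Qed.

Lemma dist_sets_le_dist_pt x S T : S !=set0 -> T !=set0 ->
  dist_sets S T <= dist_pt x S + dist_pt x T.
Proof.
move=> S0 T0; apply/ler_addgt0Pr => e e0.
have [s Ss xs] := dist_pt_approx x S0 (divr_gt0 e0 (ltr0n R 2)).
have [t Tt xt] := dist_pt_approx x T0 (divr_gt0 e0 (ltr0n R 2)).
have := dist_sets_le Ss Tt; have := ler_distD x s t; rewrite (distrC s x); lra.
Qed.

End DistanceToSet.

Section UniformConvexity.
Variables (R : realType) (V : normedModType R).

Lemma uniformly_convex_modulus : uniformly_convex V ->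
  forall eps : R, 0 < eps -> eps <= 2 -> exists2 delta : R, 0 < delta &
    forall (u w : V) (c b : R), `|u| = 1 -> `|w| = 1 -> eps <= `|u - w| ->
      0 <= c -> c <= b -> `|c *: u + b *: w| <= b + c - 2 * c * delta.
Proof.
move=> uc eps eps0 eps2; have [delta [delta0 [_ Hdelta]]] := uc eps eps0 eps2.
exists delta => // u w c b u1 w1 uw c0 cb.
have uw_half := Hdelta u w u1 w1 uw.
rewrite normrZ ger0_norm ?invr_ge0 ?ler0n // in uw_half.
have -> : c *: u + b *: w = c *: (u + w) + (b - c) *: w.
  by rewrite scalerDr scalerBl -addrA (addrC (c *: w)) subrK.
apply: le_trans (ler_normD _ _) _.
rewrite !normrZ w1 mulr1 !ger0_norm ?subr_ge0 //.
have uw2 : `|u + w| <= 2 * (1 - delta) by lra.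
by have := ler_wpM2l c0 uw2; lra.
Qed.

Lemma norm_scale_sub_le (u w : V) (c b : R) : `|u| = 1 -> 0 <= b ->
  `|c *: u - b *: w| <= `|c - b| + b * `|u - w|.
Proof.
move=> u1 b0.
have -> : c *: u - b *: w = (c - b) *: u + b *: (u - w).
  by rewrite scalerBl scalerBr addrA subrK.
by apply: le_trans (ler_normD _ _) _; rewrite !normrZ u1 mulr1 (ger0_norm b0).
Qed.

End UniformConvexity.

Section SegmentEstimate.
Variables (R : realType) (V : normedModType R) (eps delta : R).
Hypotheses (eps_ge0 : 0 <= eps) (delta_gt0 : 0 < delta).
Hypothesis modulus : forall (u w : V) (c b : R), `|u| = 1 -> `|w| = 1 ->
  eps <= `|u - w| -> 0 <= c -> c <= b -> `|c *: u + b *: w| <= b + c - 2 * c * delta.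

(* Either [x - y] and [y - s]
   point in directions at least [eps] apart, and uniform convexity makes
   [|x - s|] definitely shorter than [|x - y| + |y - s|], or they are nearly
   parallel, and then [s] is close to [a]. *)
Lemma segment_dichotomy (x y a s : V) (t : R) : 0 < t -> x != a ->
  x - y = t *: (x - a) -> y - a = (1 - t) *: (x - a) ->
  t * `|x - a| <= `|y - s| ->
  `|x - s| <= `|y - s| + t * `|x - a| - 2 * (t * `|x - a|) * delta \/
  `|s - a| <= `|(1 - t) * `|x - a| - `|y - s| | + `|y - s| * eps.
Proof.
move=> t0 xa xy ya tr_le; set r := `|x - a|; set beta := `|y - s|.
have r0 : 0 < r by rewrite normr_gt0 subr_eq0.
have beta0 : 0 < beta by apply: lt_le_trans tr_le; apply: mulr_gt0.
have unit_dir (v : V) : 0 < `|v| -> v = `|v| *: (`|v|^-1 *: v) /\ `| `|v|^-1 *: v| = 1.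
  by move=> v0; rewrite scalerA mulfV ?gt_eqF // scale1r normfZV // -normr_gt0.
have [xaE xa1] := unit_dir _ r0; have [ysE ys1] := unit_dir _ beta0.
set u := `|x - a|^-1 *: (x - a) in xaE xa1; set w := `|y - s|^-1 *: (y - s) in ysE ys1.
have [uw_far|uw_near] := leP eps `|u - w|.
- left; have -> : x - s = (t * r) *: u + beta *: w.
    have -> : x - s = (x - y) + (y - s) by rewrite addrA subrK.
    by rewrite xy {1}xaE scalerA -ysE.
  by apply: modulus => //; apply: mulr_ge0 => //; apply: ltW.
- right; have -> : s - a = ((1 - t) * r) *: u - beta *: w.
    have -> : s - a = (y - a) - (y - s) by rewrite opprB [RHS]addrC addrA subrK.
    by rewrite ya {1}xaE scalerA -ysE.
  apply: le_trans (norm_scale_sub_le w _ xa1 (ltW beta0)) _.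
  by rewrite lerD2l ler_pM2l // ltW.
Qed.

(* The constraints on [eps], [t] and [eta] make the first alternative of
   [segment_dichotomy] contradict [d <= |x - s|] and the second one contradict
   [D <= |s - a|]. *)
Lemma segment_point_far (x a s : V) (t d D eta : R) :
  0 < t <= 1 / 4 -> 0 < eta -> eta <= d -> eta <= t * d * delta / 2 ->
  eta <= D / 4 -> eta <= 1 -> eps * (d + 2) <= D / 4 ->
  d <= `|x - a| < d + eta -> d <= `|x - s| -> D <= `|s - a| ->
  (1 - t) * `|x - a| + eta <= `|x + t *: (a - x) - s|.
Proof.
move=> /andP[t0 t_le] eta0 eta_d eta_delta eta_D eta1 eps_D /andP[r_ge r_lt] xs sa.
set r := `|x - a| in r_ge r_lt *; set y := x + t *: (a - x); set beta := `|y - s|.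
have xy : x - y = t *: (x - a) by rewrite /y opprD addrA subrr add0r -scalerN opprB.
have ya : y - a = (1 - t) *: (x - a) by rewrite /y scalerBl scale1r -scalerN opprB addrAC.
have x_ne_a : x != a by rewrite -subr_eq0 -normr_gt0 -/r; lra.
have xy_norm : `|x - y| = t * r by rewrite xy normrZ ger0_norm // ltW.
have beta_ge : `|x - s| - t * r <= beta.
  by rewrite lerBlDl -xy_norm; apply: ler_distD.
have tr_ge0 : 0 <= t * r by rewrite mulr_ge0 // ?ltW //; lra.
have tr_le : t * r <= d / 2.
  have : t * r <= 1 / 4 * r by rewrite ler_pM2r //; lra.
  lra.
rewrite leNgt; apply/negP => beta_lt.
have [far|near] := segment_dichotomy t0 x_ne_a xy ya (ltac:(lra) : t * r <= beta).
- rewrite -/r -/beta in far.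
  have : t * d * delta <= t * r * delta by rewrite ler_pM2r // ler_pM2l.
  have : 0 < t * r * delta by rewrite !mulr_gt0 //; lra.
  lra.
- rewrite -/r -/beta in near.
  have : `|(1 - t) * r - beta| < eta by rewrite ltr_norml; apply/andP; split; lra.
  have : beta * eps <= (d + 2) * eps by rewrite ler_wpM2r //; lra.
  lra.
Qed.

End SegmentEstimate.

Lemma convex_set_segment (R : realType) (V : normedModType R) (X : set V) (x a : V) (t : R) :
  convex_set X -> X x -> X a -> 0 <= t <= 1 -> X (x + t *: (a - x)).
Proof.
move=> convX Xx Xa /andP[t0 t1].
have -> : x + t *: (a - x) = t *: a + (1 - t) *: x.
  by rewrite scalerBr scalerBl scale1r addrCA.
by have := convX a x (Itv01 t0 t1) (mem_set Xa) (mem_set Xx); rewrite inE.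
Qed.

Section EquidistantPoints.
Variables (R : realType) (V : normedModType R) (X S T : set V).
Hypotheses (uc : uniformly_convex V) (convX : convex_set X) (TX : T `<=` X).
Hypotheses (S0 : S !=set0) (T0 : T !=set0) (ST_gt0 : 0 < dist_sets S T).

Lemma equidistant_approx_closer (x : V) : X x -> dist_pt x S = dist_pt x T ->
  forall e, 0 < e -> exists y, [/\ X y, `|x - y| < e & dist_pt y T < dist_pt y S].
Proof.
move=> Xx xST e e0; have D0 := ST_gt0.
set d := dist_pt x T in xST *; set D := dist_sets S T in D0 *.
have dD : D / 2 <= d by have := dist_sets_le_dist_pt x S0 T0; rewrite xST; lra.
pose eps := Num.min 1 (D / (4 * (d + 2))).
have eps0 : 0 < eps by rewrite lt_min ltr01 divr_gt0 //; lra.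
have eps_D : eps * (d + 2) <= D / 4.
  have : eps <= D / (4 * (d + 2)) by rewrite ge_min lexx orbT.
  by rewrite ler_pdivlMr; lra.
have eps_le1 : eps <= 1 by rewrite ge_min lexx.
have [delta delta0 modulus] := uniformly_convex_modulus uc eps0 (ltac:(lra) : eps <= 2).
pose t := Num.min (1 / 4) (e / (2 * (d + 1))).
have t0 : 0 < t by rewrite lt_min; apply/andP; split; [lra | apply: divr_gt0 => //; lra].
have t_le : t <= 1 / 4 by rewrite ge_min lexx.
have t_e : t * (2 * (d + 1)) <= e.
  have : t <= e / (2 * (d + 1)) by rewrite ge_min lexx orbT.
  by rewrite ler_pdivlMr; lra.
pose eta := Num.min (Num.min d (t * d * delta / 2)) (Num.min (D / 4) 1).
have eta0 : 0 < eta.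
  by rewrite !lt_min ltr01 !divr_gt0 ?mulr_gt0 //=; lra.
have eta_d : eta <= d by rewrite !ge_min lexx.
have eta_delta : eta <= t * d * delta / 2 by rewrite !ge_min lexx orbT.
have eta_D : eta <= D / 4 by rewrite !ge_min lexx !orbT.
have eta1 : eta <= 1 by rewrite !ge_min lexx !orbT.
have [a Ta xa_lt] := dist_pt_approx x T0 eta0.
have xa_ge : d <= `|x - a| := dist_pt_le x Ta.
have ya : x + t *: (a - x) - a = (1 - t) *: (x - a).
  by rewrite scalerBl scale1r -scalerN opprB addrAC.
exists (x + t *: (a - x)); split.
- by apply: convex_set_segment => //; [exact: TX | lra].
- rewrite opprD addrA subrr add0r normrN normrZ ger0_norm; last lra.
  have : t * `|a - x| <= t * (d + 1) by rewrite ler_pM2l // distrC; lra.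
  nra.
- apply: le_lt_trans (dist_pt_le _ Ta) _.
  rewrite ya normrZ ger0_norm; last lra.
  apply: (@lt_le_trans _ _ ((1 - t) * `|x - a| + eta)); first by rewrite ltrDl.
  apply: dist_pt_ge => // s Ss.
  apply: (segment_point_far (d := d) (D := D) (ltW eps0) delta0 modulus) => //.
  + by apply/andP; split; lra.
  + by apply/andP.
  + by rewrite -xST; apply: dist_pt_le.
  + exact: dist_sets_le.
Qed.

End EquidistantPoints.

Lemma rel_closureS (R : realType) (V : normedModType R) (X D1 D2 : set V) :
  D1 `<=` D2 -> rel_closure X D1 `<=` rel_closure X D2.
Proof.
by move=> D12 x [Xx D1x]; split => // e /D1x [y [Xy [/D12 D2y xy]]]; exists y.
Qed.

Section Dominance.
Variables (R : realType) (V : normedModType R) (X P A : set V).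
Hypotheses (uc : uniformly_convex V) (convX : convex_set X).
Hypotheses (PX : P `<=` X) (AX : A `<=` X) (P0 : P !=set0) (A0 : A !=set0).
Hypothesis (PA_gt0 : 0 < dist_sets P A).

Lemma rel_interior_dom :
  rel_interior X (dom X P A) = [set x | X x /\ dist_pt x P < dist_pt x A].
Proof.
apply/seteqP; split => x.
- move=> [Xx [e [e0 domx]]]; split => //.
  have [_ xPA] : dom X P A x by apply: domx; rewrite // subrr normr0.
  rewrite lt_neqAle xPA andbT; apply/eqP => xPA_eq.
  have [y [Xy xy yAP]] := equidistant_approx_closer uc convX AX P0 A0 PA_gt0 Xx xPA_eq e0.
  by have [_ yPA] := domx y Xy xy; lra.
- move=> [Xx xPA]; split => //; exists ((dist_pt x A - dist_pt x P) / 2).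
  split; first lra.
  by move=> y Xy xy; split => //; apply: ltW; apply: dist_pt_lt_near P0 A0 xy.
Qed.

Lemma rel_closure_dom : rel_closure X (dom X P A) = dom X P A.
Proof.
apply/seteqP; split => x; last first.
  move=> [Xx xPA]; split => // e e0.
  by exists x; rewrite subrr normr0; do !split.
move=> [Xx domx]; split => //; rewrite leNgt; apply/negP => xAP.
have gap0 : 0 < (dist_pt x P - dist_pt x A) / 2 by lra.
have [y [_ [[_ yPA] xy]]] := domx _ gap0.
by have := dist_pt_lt_near A0 P0 xy; lra.
Qed.

Lemma dom_sub_rel_closure_lt :
  dom X P A `<=` rel_closure X [set x | X x /\ dist_pt x P < dist_pt x A].
Proof.
move=> x [Xx xPA]; split => // e e0.
have [xPA_lt|xPA_eq] : dist_pt x P < dist_pt x A \/ dist_pt x P = dist_pt x A.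
  by move: xPA; rewrite le_eqVlt => /orP[/eqP|]; [right | left].
  by exists x; rewrite subrr normr0.
have AP_gt0 : 0 < dist_sets A P by rewrite dist_setsC.
have [y [Xy xy yPA]] := equidistant_approx_closer uc convX PX A0 P0 AP_gt0 Xx (esym xPA_eq) e0.
by exists y.
Qed.

End Dominance.

Theorem theorem3p3 (R : realType) (V : normedModType R) (X P A : set V) :
  uniformly_convex V ->
  convex_set X ->
  P `<=` X -> A `<=` X ->
  P !=set0 -> A !=set0 ->
  0 < dist_sets P A ->
  [/\ rel_boundary X (dom X P A) = [set x | X x /\ dist_pt x P = dist_pt x A],
      rel_interior X (dom X P A) = [set x | X x /\ dist_pt x P < dist_pt x A]
    & dom X P A = rel_closure X [set x | X x /\ dist_pt x P < dist_pt x A]].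
Proof.
move=> uc convX PX AX P0 A0 PA_gt0.
have int_dom := rel_interior_dom uc convX AX P0 A0 PA_gt0.
have cl_dom := rel_closure_dom X P0 A0.
split => //.
- rewrite /rel_boundary cl_dom int_dom; apply/seteqP; split => x.
  + move=> [[Xx xPA] xPA_lt]; split => //; apply/eqP; rewrite eq_le xPA /= leNgt.
    by apply/negP => ?; apply: xPA_lt.
  + move=> [Xx xPA]; split; first by split; rewrite // xPA.
    by move=> [_]; rewrite xPA ltxx.
- apply/seteqP; split; first exact: dom_sub_rel_closure_lt.
  rewrite -[X in _ `<=` X]cl_dom; apply: rel_closureS => x [Xx xPA].
  by split => //; apply: ltW.
Qed.
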